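(* For the SVIQR system, the point $E^0$ with $S_k=S_k^0=\frac{\Lambda_k(d+\omega+\alpha)}{(d+\omega+\alpha)d+(d+\alpha)\mu_k}$, $V_k=V_k^0=\frac{\Lambda_k\mu_k}{(d+\omega+\alpha)d+(d+\alpha)\mu_k}$, $I_k=Q_k=0$, $R_k=R_k^0=\frac{\alpha}{d}V_k^0$ ($k=1,\dots,n$) is always an equilibrium, and it is the only equilibrium with $\Theta=0$. Define $$R_0=\frac{1}{\langle k\rangle}\sum_{k=1}^n\varphi(k)p(k)\lambda(k)\frac{\Lambda_k\,(d+\omega+\alpha+\delta\mu_k)}{(\gamma+\beta+d)\big[(d+\alpha+\omega)d+(d+\alpha)\mu_k\big]}.$$ Then the SVIQR system has an equilibrium with nonnegative components and $\Theta>0$ (an endemic equilibrium, in which $I_k>0$ for all $k$) if and only if $R_0>1$, and in that case this endemic equilibrium $E^*$ is unique.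
   Context: Fix an integer $n\ge1$ and numbers $p(1),\dots,p(n)>0$ with $\sum_{k=1}^n p(k)=1$; set $\langle k\rangle=\sum_{k=1}^n kp(k)$. Fix constants $b>d>0$ and let $\Phi^*>0$ satisfy $\Phi^*=\frac{1}{\langle k\rangle}\sum_{i=1}^n \frac{i\,p(i)\,b\Phi^*}{d+bi\Phi^*}$. For $k=1,\dots,n$ put $N_k^*=\frac{bk\Phi^*}{d+bk\Phi^*}\in(0,1)$ and $\Lambda_k=bk(1-N_k^* )\Phi^*$ (so $\Lambda_k=dN_k^*>0$). Parameters: $\lambda(k)>0$, $\varphi(k)>0$, $\mu_k>0$ for $k=1,\dots,n$; constants $\alpha,\beta,\gamma,\eta,\omega>0$ and $\delta\in[0,1]$. Write $\xi=\gamma+\beta+d$. For functions $I_1(t),\dots,I_n(t)$ set $\Theta(t)=\frac{1}{\langle k\rangle}\sum_{i=1}^n\varphi(i)p(i)I_i(t)$. The SVIQR system is, for $k=1,\dots,n$: $S_k'=\Lambda_k-\lambda(k)S_k\Theta+\omega V_k-(\mu_k+d)S_k$, $V_k'=\mu_kS_k-\delta\lambda(k)V_k\Theta-(d+\omega+\alpha)V_k$, $I_k'=\lambda(k)S_k\Theta+\delta\lambda(k)V_k\Theta-(\gamma+\beta+d)I_k$, $Q_k'=\beta I_k-(\eta+d)Q_k$, $R_k'=\gamma I_k+\eta Q_k+\alpha V_k-dR_k$. An equilibrium is a point where all these right-hand sides vanish. *)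

From Stdlib Require Import Reals Lra Lia.
Open Scope R_scope.

Fixpoint sum1n (n : nat) (f : nat -> R) : R :=
  match n with
  | O => 0
  | S m => sum1n m f + f (S m)
  end.

Definition kavg (n : nat) (p : nat -> R) : R := sum1n n (fun k => INR k * p k).

Definition Nstar (b d Phis : R) (k : nat) : R :=
  b * INR k * Phis / (d + b * INR k * Phis).
Definition Lam (b d Phis : R) (k : nat) : R :=
  b * INR k * (1 - Nstar b d Phis k) * Phis.

Definition Theta (n : nat) (p phi I : nat -> R) : R :=
  / kavg n p * sum1n n (fun i => phi i * p i * I i).

Definition is_equilibrium (n : nat) (p : nat -> R) (b d Phis : R)
  (lam phi mu : nat -> R) (alpha beta gamma eta omega delta : R)
  (S V I Q Rr : nat -> R) : Prop :=
  let Th := Theta n p phi I in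
  forall k, (1 <= k <= n)%nat ->
    Lam b d Phis k - lam k * S k * Th + omega * V k - (mu k + d) * S k = 0 /\
    mu k * S k - delta * lam k * V k * Th - (d + omega + alpha) * V k = 0 /\
    lam k * S k * Th + delta * lam k * V k * Th - (gamma + beta + d) * I k = 0 /\
    beta * I k - (eta + d) * Q k = 0 /\
    gamma * I k + eta * Q k + alpha * V k - d * Rr k = 0.

Definition nonneg_state (n : nat) (S V I Q Rr : nat -> R) : Prop :=
  forall k, (1 <= k <= n)%nat ->
    0 <= S k /\ 0 <= V k /\ 0 <= I k /\ 0 <= Q k /\ 0 <= Rr k.

Definition same_state (n : nat) (S V I Q Rr S' V' I' Q' Rr' : nat -> R) : Prop :=
  forall k, (1 <= k <= n)%nat ->
    S k = S' k /\ V k = V' k /\ I k = I' k /\ Q k = Q' k /\ Rr k = Rr' k.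

Definition denom0 (d alpha omega : R) (mu : nat -> R) (k : nat) : R :=
  (d + omega + alpha) * d + (d + alpha) * mu k.
Definition S0 (b d Phis alpha omega : R) (mu : nat -> R) (k : nat) : R :=
  Lam b d Phis k * (d + omega + alpha) / denom0 d alpha omega mu k.
Definition V0 (b d Phis alpha omega : R) (mu : nat -> R) (k : nat) : R :=
  Lam b d Phis k * mu k / denom0 d alpha omega mu k.
Definition R0comp (b d Phis alpha omega : R) (mu : nat -> R) (k : nat) : R :=
  alpha / d * V0 b d Phis alpha omega mu k.

Definition Rnought (n : nat) (p : nat -> R) (b d Phis : R)
  (lam phi mu : nat -> R) (alpha beta gamma omega delta : R) : R :=
  / kavg n p * sum1n n (fun k =>
    phi k * p k * lam k * (Lam b d Phis k * (d + omega + alpha + delta * mu k)) /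
    ((gamma + beta + d) * ((d + alpha + omega) * d + (d + alpha) * mu k))).

From Stdlib Require Import Reals Lra Lia Ranalysis5.
Open Scope R_scope.

(* With Θ frozen at a value T, the equilibrium equations decouple into one
   linear system per degree class k, with a unique solution
   (S, V, I, Q, R)(T), nonnegative for T >= 0, in which I_k(T) = T g_k(T) for a
   strictly decreasing g_k.  Equilibria are thus the fixed points
   T = Θ(I(T)) = T F(T) with F = <k>^-1 Σ φ(k) p(k) g_k continuous, strictly
   decreasing and F(0) = R_0; moreover T F(T) stays bounded since the total
   population of class k is Λ_k / d.  T = 0 gives E^0, and a positive fixed
   point is a solution of F(T) = 1, which exists (intermediate value theorem)
   iff R_0 > 1 and is then unique. *)

Lemma sum1n_ext n f g :
  (forall k, (1 <= k <= n)%nat -> f k = g k) -> sum1n n f = sum1n n g.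
Proof.
  induction n as [|n IH]; intros H; simpl; [reflexivity|].
  rewrite IH by (intros; apply H; lia). rewrite H by lia. reflexivity.
Qed.

Lemma sum1n_le n f g :
  (forall k, (1 <= k <= n)%nat -> f k <= g k) -> sum1n n f <= sum1n n g.
Proof.
  induction n as [|n IH]; intros H; simpl; [lra|].
  assert (sum1n n f <= sum1n n g) by (apply IH; intros; apply H; lia).
  assert (f (S n) <= g (S n)) by (apply H; lia).
  lra.
Qed.

Lemma sum1n_lt n f g : (1 <= n)%nat ->
  (forall k, (1 <= k <= n)%nat -> f k < g k) -> sum1n n f < sum1n n g.
Proof.
  destruct n as [|n]; [lia|]. intros _ H; simpl.
  assert (sum1n n f <= sum1n n g) by (apply sum1n_le; intros; left; apply H; lia).
  assert (f (S n) < g (S n)) by (apply H; lia).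
  lra.
Qed.

Lemma sum1n_scal_l n a f : sum1n n (fun k => a * f k) = a * sum1n n f.
Proof. induction n as [|n IH]; simpl; [ring|]. rewrite IH. ring. Qed.

Lemma sum1n_pos n f : (1 <= n)%nat ->
  (forall k, (1 <= k <= n)%nat -> 0 < f k) -> 0 < sum1n n f.
Proof.
  intros Hn H. apply Rle_lt_trans with (sum1n n (fun _ => 0)).
  - right. clear. induction n as [|n IH]; simpl; [|rewrite <- IH]; ring.
  - apply sum1n_lt; auto.
Qed.

Lemma continuity_pt_sum1n n (f : nat -> R -> R) x :
  (forall k, (1 <= k <= n)%nat -> continuity_pt (f k) x) ->
  continuity_pt (fun T => sum1n n (fun k => f k T)) x.
Proof.
  induction n as [|n IH]; intros H; simpl.
  - apply continuity_pt_const. intros ? ?. reflexivity.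
  - apply (continuity_pt_plus (fun T => sum1n n (fun k => f k T)) (f (S n))).
    + apply IH. intros. apply H. lia.
    + apply H. lia.
Qed.

Lemma Theta_ext n p phi I I' :
  (forall k, (1 <= k <= n)%nat -> I k = I' k) -> Theta n p phi I = Theta n p phi I'.
Proof.
  intros H. unfold Theta. f_equal. apply sum1n_ext. intros k Hk. rewrite H by exact Hk. reflexivity.
Qed.

Lemma same_state_sym n S V I Q Rr S' V' I' Q' Rr' :
  same_state n S V I Q Rr S' V' I' Q' Rr' -> same_state n S' V' I' Q' Rr' S V I Q Rr.
Proof. intros H k Hk. destruct (H k Hk) as (? & ? & ? & ? & ?). auto. Qed.

Lemma same_state_trans n S V I Q Rr S' V' I' Q' Rr' S'' V'' I'' Q'' Rr'' :
  same_state n S V I Q Rr S' V' I' Q' Rr' -> same_state n S' V' I' Q' Rr' S'' V'' I'' Q'' Rr'' ->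
  same_state n S V I Q Rr S'' V'' I'' Q'' Rr''.
Proof.
  intros H H' k Hk. destruct (H k Hk) as (-> & -> & -> & -> & ->). exact (H' k Hk).
Qed.

Lemma Lam_pos b d Phis k : 0 < b -> 0 < d -> 0 < Phis -> (1 <= k)%nat -> 0 < Lam b d Phis k.
Proof.
  intros Hb Hd HPhis Hk. assert (1 <= INR k) by (apply (le_INR 1); exact Hk).
  assert (0 < b * INR k * Phis) by (apply Rmult_lt_0_compat; nra).
  unfold Lam, Nstar.
  replace (b * INR k * (1 - b * INR k * Phis / (d + b * INR k * Phis)) * Phis)
    with (b * INR k * Phis * d / (d + b * INR k * Phis)) by (field; lra).
  apply Rdiv_lt_0_compat; nra.
Qed.

Lemma eq_div_of_mul x y c : c <> 0 -> x * c = y -> x = y / c.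
Proof. intros Hc <-. field. exact Hc. Qed.

Section Node.

Variables L l m d alpha beta gamma eta omega delta : R.
Hypotheses (HL : 0 < L) (Hl : 0 < l) (Hm : 0 < m) (Hd : 0 < d)
  (Halpha : 0 < alpha) (Hbeta : 0 < beta) (Hgamma : 0 < gamma) (Heta : 0 < eta)
  (Homega : 0 < omega) (Hdelta : 0 <= delta).

Definition node_eq (T S V I Q Rr : R) : Prop :=
  L - l * S * T + omega * V - (m + d) * S = 0 /\
  m * S - delta * l * V * T - (d + omega + alpha) * V = 0 /\
  l * S * T + delta * l * V * T - (gamma + beta + d) * I = 0 /\
  beta * I - (eta + d) * Q = 0 /\
  gamma * I + eta * Q + alpha * V - d * Rr = 0.

Definition node_denom (T : R) : R :=
  (l * T + m + d) * (delta * l * T + (d + omega + alpha)) - omega * m.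
Definition node_S (T : R) : R := L * (delta * l * T + (d + omega + alpha)) / node_denom T.
Definition node_V (T : R) : R := m * L / node_denom T.
Definition node_gain (T : R) : R := l * (node_S T + delta * node_V T) / (gamma + beta + d).
Definition node_I (T : R) : R := T * node_gain T.
Definition node_Q (T : R) : R := beta * node_I T / (eta + d).
Definition node_R (T : R) : R := (gamma * node_I T + eta * node_Q T + alpha * node_V T) / d.

Lemma node_V_outflow_pos T : 0 <= T -> 0 < delta * l * T + (d + omega + alpha).
Proof.
  intros HT. assert (0 <= delta * l * T) by (apply Rmult_le_pos; [apply Rmult_le_pos|]; lra).
  lra.
Qed.

Lemma node_denom_pos T : 0 <= T -> 0 < node_denom T.
Proof.
  intros HT. unfold node_denom. pose proof (node_V_outflow_pos T HT).
  assert (0 <= l * T) by nra. assert (0 <= delta * l * T) by nra.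
  assert (0 <= l * T * (delta * l * T + (d + omega + alpha))) by nra.
  assert (0 <= (m + d) * (delta * l * T)) by nra.
  assert (0 < m * (d + alpha) + d * (d + omega + alpha)) by nra.
  lra.
Qed.

Lemma node_eq_solution T :
  0 <= T -> node_eq T (node_S T) (node_V T) (node_I T) (node_Q T) (node_R T).
Proof.
  intros HT. pose proof (node_denom_pos T HT) as HD.
  unfold node_eq, node_R, node_Q, node_I, node_gain, node_S, node_V.
  unfold node_denom in *.
  repeat split; field; lra.
Qed.

Lemma node_eq_unique T S V I Q Rr :
  0 <= T -> node_eq T S V I Q Rr ->
  S = node_S T /\ V = node_V T /\ I = node_I T /\ Q = node_Q T /\ Rr = node_R T.
Proof.
  intros HT (E1 & E2 & E3 & E4 & E5).
  pose proof (node_denom_pos T HT) as HD.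
  pose proof (node_V_outflow_pos T HT) as Hc.
  (* Cramer's rule for the linear (S, V) block *)
  assert (cramer : S * node_denom T - L * (delta * l * T + (d + omega + alpha)) =
    - (delta * l * T + (d + omega + alpha)) * (L - l * S * T + omega * V - (m + d) * S)
    - omega * (m * S - delta * l * V * T - (d + omega + alpha) * V))
    by (unfold node_denom; ring).
  rewrite E1, E2 in cramer.
  assert (HS : S = node_S T) by (apply eq_div_of_mul; lra).
  assert (HV : V = node_V T).
  { apply (Rmult_eq_reg_r (delta * l * T + (d + omega + alpha))); [|lra].
    transitivity (m * S); [lra|]. rewrite HS. unfold node_V, node_S. field. lra. }
  assert (HI : I = node_I T).
  { unfold node_I, node_gain. rewrite <- HS, <- HV.
    apply (Rmult_eq_reg_r (gamma + beta + d)); [|lra].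
    transitivity (l * S * T + delta * l * V * T); [lra | field; lra]. }
  assert (HQ : Q = node_Q T) by (unfold node_Q; rewrite <- HI; apply eq_div_of_mul; lra).
  assert (HR : Rr = node_R T)
    by (unfold node_R; rewrite <- HI, <- HQ, <- HV; apply eq_div_of_mul; lra).
  auto.
Qed.

Lemma node_eq_population T S V I Q Rr :
  node_eq T S V I Q Rr -> S + V + I + Q + Rr = L / d.
Proof.
  intros (E1 & E2 & E3 & E4 & E5). apply eq_div_of_mul; lra.
Qed.

Lemma node_gain_pos T : 0 <= T -> 0 < node_gain T.
Proof.
  intros HT. pose proof (node_denom_pos T HT) as HD.
  assert (HS : 0 < node_S T).
  { apply Rdiv_lt_0_compat; [|lra]. pose proof (node_V_outflow_pos T HT). nra. }
  assert (HV : 0 <= delta * node_V T) by (apply Rmult_le_pos; [|apply Rlt_le, Rdiv_lt_0_compat]; nra).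
  apply Rdiv_lt_0_compat; nra.
Qed.

Lemma node_I_pos T : 0 < T -> 0 < node_I T.
Proof. intros HT. apply Rmult_lt_0_compat; [|apply node_gain_pos]; lra. Qed.

Lemma node_state_nonneg T : 0 <= T ->
  0 <= node_S T /\ 0 <= node_V T /\ 0 <= node_I T /\ 0 <= node_Q T /\ 0 <= node_R T.
Proof.
  intros HT. pose proof (node_denom_pos T HT) as HD.
  assert (HS : 0 < node_S T).
  { apply Rdiv_lt_0_compat; [|lra]. pose proof (node_V_outflow_pos T HT). nra. }
  assert (HV : 0 < node_V T) by (apply Rdiv_lt_0_compat; nra).
  assert (HI : 0 <= node_I T) by (apply Rmult_le_pos; [|apply Rlt_le, node_gain_pos]; lra).
  assert (HQ : 0 <= node_Q T) by (apply Rmult_le_pos; [nra|]; apply Rlt_le, Rinv_0_lt_compat; lra).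
  assert (HR : 0 <= node_R T).
  { apply Rmult_le_pos; [nra|]; apply Rlt_le, Rinv_0_lt_compat; lra. }
  repeat split; lra.
Qed.

Lemma node_I_le T : 0 <= T -> node_I T <= L / d.
Proof.
  intros HT. rewrite <- (node_eq_population T _ _ _ _ _ (node_eq_solution T HT)).
  pose proof (node_state_nonneg T HT). lra.
Qed.

Lemma node_gain_decreasing x y : 0 <= x -> x < y -> node_gain y < node_gain x.
Proof.
  intros Hx Hxy.
  pose proof (node_denom_pos x Hx) as Dx.
  pose proof (node_denom_pos y ltac:(lra)) as Dy.
  set (c := d + omega + alpha).
  set (P := (delta * l * x) * (delta * l * y) + (c + delta * m) * (delta * l * x + delta * l * y)
            + (c * c + c * delta * m + delta * delta * m * m + delta * delta * m * d + delta * omega * m)).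
  assert (Hdiff : node_gain x - node_gain y =
    l * L * (l * (y - x) * P) / ((gamma + beta + d) * node_denom x * node_denom y)).
  { unfold node_gain, node_S, node_V, P, c. unfold node_denom in *. field. repeat split; lra. }
  assert (HP : 0 < P).
  { assert (0 <= delta * l * x) by (apply Rmult_le_pos; [apply Rmult_le_pos|]; lra).
    assert (0 <= delta * l * y) by (apply Rmult_le_pos; [apply Rmult_le_pos|]; lra).
    assert (0 <= delta * m) by nra. assert (0 < c) by (unfold c; lra).
    assert (0 <= (delta * l * x) * (delta * l * y)) by nra.
    assert (0 <= (c + delta * m) * (delta * l * x + delta * l * y)) by nra.
    assert (0 <= c * (delta * m)) by nra. assert (0 <= (delta * m) * (delta * m)) by nra.
    assert (0 <= (delta * m) * (delta * d)) by (apply Rmult_le_pos; nra).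
    assert (0 <= omega * (delta * m)) by nra.
    unfold P. nra. }
  assert (0 < l * L * (l * (y - x) * P) / ((gamma + beta + d) * node_denom x * node_denom y)).
  { apply Rdiv_lt_0_compat; [|apply Rmult_lt_0_compat; [apply Rmult_lt_0_compat|]; lra].
    apply Rmult_lt_0_compat; [nra|]. apply Rmult_lt_0_compat; [nra|lra]. }
  lra.
Qed.

Lemma node_gain_0 : node_gain 0 =
  l * (L * (d + omega + alpha + delta * m)) / ((gamma + beta + d) * ((d + alpha + omega) * d + (d + alpha) * m)).
Proof.
  pose proof (node_denom_pos 0 (Rle_refl 0)) as HD.
  unfold node_gain, node_S, node_V. unfold node_denom in *. field. split; nra.
Qed.

Lemma node_state_0 :
  node_S 0 = L * (d + omega + alpha) / ((d + omega + alpha) * d + (d + alpha) * m) /\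
  node_V 0 = L * m / ((d + omega + alpha) * d + (d + alpha) * m) /\
  node_I 0 = 0 /\ node_Q 0 = 0 /\ node_R 0 = alpha / d * node_V 0.
Proof.
  pose proof (node_denom_pos 0 (Rle_refl 0)) as HD.
  assert (HI : node_I 0 = 0) by (unfold node_I; ring).
  assert (HQ : node_Q 0 = 0) by (unfold node_Q; rewrite HI; unfold Rdiv; ring).
  unfold node_R. rewrite HQ, HI. unfold node_S, node_V. unfold node_denom in *.
  repeat split; field; nra.
Qed.

Lemma node_gain_continuous T : 0 <= T -> continuity_pt node_gain T.
Proof.
  intros HT. pose proof (node_denom_pos T HT) as HD.
  unfold node_gain, node_S, node_V. unfold node_denom in *. reg. lra.
Qed.

End Node.

Section Network.

Variables (n : nat) (p : nat -> R) (b d Phis : R) (lam phi mu : nat -> R)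
  (alpha beta gamma eta omega delta : R).
Hypotheses (Hn : (1 <= n)%nat) (Hp : forall k, (1 <= k <= n)%nat -> 0 < p k)
  (Hb : 0 < b) (Hd : 0 < d) (HPhis : 0 < Phis)
  (Hlam : forall k, (1 <= k <= n)%nat -> 0 < lam k)
  (Hphi : forall k, (1 <= k <= n)%nat -> 0 < phi k)
  (Hmu : forall k, (1 <= k <= n)%nat -> 0 < mu k)
  (Halpha : 0 < alpha) (Hbeta : 0 < beta) (Hgamma : 0 < gamma)
  (Heta : 0 < eta) (Homega : 0 < omega) (Hdelta : 0 <= delta).

Local Notation equilibrium :=
  (is_equilibrium n p b d Phis lam phi mu alpha beta gamma eta omega delta).
Local Notation Lk k := (Lam b d Phis k).

Definition S_of T k := node_S (Lk k) (lam k) (mu k) d alpha omega delta T.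
Definition V_of T k := node_V (Lk k) (lam k) (mu k) d alpha omega delta T.
Definition I_of T k := node_I (Lk k) (lam k) (mu k) d alpha beta gamma omega delta T.
Definition Q_of T k := node_Q (Lk k) (lam k) (mu k) d alpha beta gamma eta omega delta T.
Definition R_of T k := node_R (Lk k) (lam k) (mu k) d alpha beta gamma eta omega delta T.

Definition reproduction_at (T : R) : R :=
  / kavg n p * sum1n n (fun k =>
    phi k * p k * node_gain (Lk k) (lam k) (mu k) d alpha beta gamma omega delta T).

Definition endemic_equilibrium S V I Q Rr : Prop :=
  equilibrium S V I Q Rr /\ nonneg_state n S V I Q Rr /\ Theta n p phi I > 0.

Lemma Lk_pos k : (1 <= k <= n)%nat -> 0 < Lk k.
Proof. intros Hk. apply Lam_pos; auto. lia. Qed.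

Local Hint Resolve Lk_pos : core.

Lemma kavg_pos : 0 < kavg n p.
Proof.
  apply sum1n_pos; auto. intros k Hk.
  assert (1 <= INR k) by (apply (le_INR 1); lia). pose proof (Hp k Hk). nra.
Qed.

Lemma equilibrium_state S V I Q Rr :
  equilibrium S V I Q Rr -> 0 <= Theta n p phi I ->
  let T := Theta n p phi I in
  same_state n S V I Q Rr (S_of T) (V_of T) (I_of T) (Q_of T) (R_of T).
Proof.
  intros H HT T k Hk. apply node_eq_unique; auto. exact (H k Hk).
Qed.

Lemma equilibrium_of_state T :
  0 <= T -> Theta n p phi (I_of T) = T ->
  equilibrium (S_of T) (V_of T) (I_of T) (Q_of T) (R_of T).
Proof.
  intros HT Hfix k Hk. cbv zeta. rewrite Hfix. apply node_eq_solution; auto.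
Qed.

Lemma equilibrium_same_state S V I Q Rr S' V' I' Q' Rr' :
  same_state n S V I Q Rr S' V' I' Q' Rr' ->
  equilibrium S' V' I' Q' Rr' -> equilibrium S V I Q Rr.
Proof.
  intros Hsame H k Hk. cbv zeta.
  rewrite (Theta_ext n p phi I I') by (intros j Hj; apply (Hsame j Hj)).
  destruct (Hsame k Hk) as (-> & -> & -> & -> & ->). exact (H k Hk).
Qed.

Lemma Theta_I_of T : Theta n p phi (I_of T) = T * reproduction_at T.
Proof.
  unfold Theta, reproduction_at.
  rewrite <- Rmult_assoc, (Rmult_comm T), Rmult_assoc, <- (sum1n_scal_l n T).
  f_equal. apply sum1n_ext. intros k _. unfold I_of, node_I. ring.
Qed.

Lemma reproduction_at_0 :
  reproduction_at 0 = Rnought n p b d Phis lam phi mu alpha beta gamma omega delta.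
Proof.
  unfold reproduction_at, Rnought. f_equal. apply sum1n_ext. intros k Hk.
  rewrite node_gain_0 by auto. unfold Rdiv. ring.
Qed.

Lemma reproduction_at_decreasing x y : 0 <= x -> x < y -> reproduction_at y < reproduction_at x.
Proof.
  intros Hx Hxy. unfold reproduction_at.
  apply Rmult_lt_compat_l; [apply Rinv_0_lt_compat, kavg_pos|].
  apply sum1n_lt; auto. intros k Hk.
  apply Rmult_lt_compat_l; [apply Rmult_lt_0_compat; auto|].
  apply node_gain_decreasing; auto.
Qed.

Lemma reproduction_at_continuous T : 0 <= T -> continuity_pt reproduction_at T.
Proof.
  intros HT. unfold reproduction_at.
  apply continuity_pt_mult; [apply continuity_pt_const; intros ? ?; reflexivity|].
  apply (continuity_pt_sum1n n (fun k T =>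
    phi k * p k * node_gain (Lk k) (lam k) (mu k) d alpha beta gamma omega delta T)).
  intros k Hk.
  apply continuity_pt_mult; [apply continuity_pt_const; intros ? ?; reflexivity|].
  apply node_gain_continuous; auto.
Qed.

Lemma reproduction_at_lt_1 : exists y, 0 < y /\ reproduction_at y < 1.
Proof.
  set (M := / kavg n p * sum1n n (fun k => phi k * p k * (Lk k / d))).
  pose proof kavg_pos as HK.
  assert (HM : 0 <= M).
  { apply Rmult_le_pos; [apply Rlt_le, Rinv_0_lt_compat; exact HK|].
    apply Rlt_le, sum1n_pos; auto. intros k Hk.
    apply Rmult_lt_0_compat; [apply Rmult_lt_0_compat|apply Rdiv_lt_0_compat]; auto. }
  assert (Hbound : forall T, 0 <= T -> T * reproduction_at T <= M).
  { intros T HT. rewrite <- Theta_I_of. unfold Theta, M.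
    apply Rmult_le_compat_l; [apply Rlt_le, Rinv_0_lt_compat; exact HK|].
    apply sum1n_le. intros k Hk.
    apply Rmult_le_compat_l; [apply Rlt_le, Rmult_lt_0_compat; auto|].
    apply node_I_le with (eta := eta); auto. }
  exists (M + 1). split; [lra|].
  pose proof (Hbound (M + 1) ltac:(lra)).
  apply (Rmult_lt_reg_l (M + 1)); lra.
Qed.

Lemma reproduction_at_eq_1_exists :
  Rnought n p b d Phis lam phi mu alpha beta gamma omega delta > 1 ->
  exists T, 0 < T /\ reproduction_at T = 1.
Proof.
  intros HR. rewrite <- reproduction_at_0 in HR.
  destruct reproduction_at_lt_1 as (y & Hy & Hlt).
  destruct (IVT_interv (fun T => 1 - reproduction_at T) 0 y) as (z & Hz & Hfz).
  - intros a Ha. apply continuity_pt_minus.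
    + apply continuity_pt_const. intros ? ?. reflexivity.
    + apply reproduction_at_continuous. lra.
  - exact Hy.
  - cbv beta. lra.
  - cbv beta. lra.
  - exists z. split; [|lra].
    destruct (Req_dec z 0) as [->|]; lra.
Qed.

Lemma reproduction_at_equilibrium S V I Q Rr :
  equilibrium S V I Q Rr -> 0 < Theta n p phi I -> reproduction_at (Theta n p phi I) = 1.
Proof.
  intros H HT. set (T := Theta n p phi I).
  assert (Hfix : T = T * reproduction_at T).
  { rewrite <- Theta_I_of. apply Theta_ext. intros k Hk.
    apply (equilibrium_state S V I Q Rr H (Rlt_le _ _ HT) k Hk). }
  apply (Rmult_eq_reg_l T); [|unfold T; lra]. rewrite <- Hfix. ring.
Qed.

Lemma disease_free_state :
  same_state n (S0 b d Phis alpha omega mu) (V0 b d Phis alpha omega mu) (fun _ => 0) (fun _ => 0)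
    (R0comp b d Phis alpha omega mu) (S_of 0) (V_of 0) (I_of 0) (Q_of 0) (R_of 0).
Proof.
  intros k Hk.
  edestruct (node_state_0 (Lk k) (lam k) (mu k) d alpha beta gamma eta omega delta)
    as (HS & HV & HI & HQ & HR); auto.
  unfold S_of, V_of, I_of, Q_of, R_of. rewrite HR, HS, HV, HI, HQ.
  unfold S0, V0, R0comp, denom0. repeat split; unfold Rdiv; ring.
Qed.

Lemma disease_free_equilibrium :
  equilibrium (S0 b d Phis alpha omega mu) (V0 b d Phis alpha omega mu) (fun _ => 0) (fun _ => 0)
    (R0comp b d Phis alpha omega mu).
Proof.
  eapply equilibrium_same_state; [exact disease_free_state|].
  apply equilibrium_of_state; [lra|]. rewrite Theta_I_of. ring.
Qed.

Lemma disease_free_unique S V I Q Rr :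
  equilibrium S V I Q Rr -> Theta n p phi I = 0 ->
  same_state n S V I Q Rr (S0 b d Phis alpha omega mu) (V0 b d Phis alpha omega mu)
    (fun _ => 0) (fun _ => 0) (R0comp b d Phis alpha omega mu).
Proof.
  intros H HT. eapply same_state_trans; [apply (equilibrium_state _ _ _ _ _ H); lra|].
  cbv zeta. rewrite HT. apply same_state_sym, disease_free_state.
Qed.

Lemma endemic_exists_iff :
  (exists S V I Q Rr, endemic_equilibrium S V I Q Rr) <->
  Rnought n p b d Phis lam phi mu alpha beta gamma omega delta > 1.
Proof.
  split.
  - intros (S & V & I & Q & Rr & H & _ & HT).
    rewrite <- reproduction_at_0, <- (reproduction_at_equilibrium S V I Q Rr H HT).
    apply reproduction_at_decreasing; lra.
  - intros HR. destruct (reproduction_at_eq_1_exists HR) as (T & HT & HF).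
    assert (Hfix : Theta n p phi (I_of T) = T) by (rewrite Theta_I_of, HF; ring).
    exists (S_of T), (V_of T), (I_of T), (Q_of T), (R_of T). split; [|split].
    + apply equilibrium_of_state; lra.
    + intros k Hk. apply node_state_nonneg; auto; lra.
    + rewrite Hfix. lra.
Qed.

Lemma endemic_I_pos S V I Q Rr :
  endemic_equilibrium S V I Q Rr -> forall k, (1 <= k <= n)%nat -> I k > 0.
Proof.
  intros (H & _ & HT) k Hk.
  destruct (equilibrium_state S V I Q Rr H (Rlt_le _ _ HT) k Hk) as (_ & _ & -> & _ & _).
  apply node_I_pos; auto.
Qed.

Lemma endemic_unique S V I Q Rr S' V' I' Q' Rr' :
  endemic_equilibrium S V I Q Rr -> endemic_equilibrium S' V' I' Q' Rr' ->
  same_state n S V I Q Rr S' V' I' Q' Rr'.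
Proof.
  intros (H & _ & HT) (H' & _ & HT').
  pose proof (reproduction_at_equilibrium S V I Q Rr H HT) as HF.
  pose proof (reproduction_at_equilibrium S' V' I' Q' Rr' H' HT') as HF'.
  assert (ET : Theta n p phi I = Theta n p phi I').
  { destruct (Rtotal_order (Theta n p phi I) (Theta n p phi I')) as [Hlt | [Heq | Hgt]].
    - pose proof (reproduction_at_decreasing _ _ (Rlt_le _ _ HT) Hlt). lra.
    - exact Heq.
    - pose proof (reproduction_at_decreasing _ _ (Rlt_le _ _ HT') Hgt). lra. }
  eapply same_state_trans; [apply (equilibrium_state _ _ _ _ _ H); lra|].
  cbv zeta. rewrite ET. apply same_state_sym, equilibrium_state; auto; lra.
Qed.

End Network.

Theorem theorem4p1
  (n : nat) (p : nat -> R) (b d Phis : R)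
  (lam phi mu : nat -> R) (alpha beta gamma eta omega delta : R)
  (Hn : (1 <= n)%nat)
  (Hp : forall k, (1 <= k <= n)%nat -> 0 < p k)
  (Hpsum : sum1n n p = 1)
  (Hbd : b > d) (Hd : d > 0)
  (HPhis : Phis > 0)
  (HPhieq : Phis = / kavg n p *
      sum1n n (fun i => INR i * p i * b * Phis / (d + b * INR i * Phis)))
  (Hlam : forall k, (1 <= k <= n)%nat -> 0 < lam k)
  (Hphi : forall k, (1 <= k <= n)%nat -> 0 < phi k)
  (Hmu : forall k, (1 <= k <= n)%nat -> 0 < mu k)
  (Halpha : 0 < alpha) (Hbeta : 0 < beta) (Hgamma : 0 < gamma)
  (Heta : 0 < eta) (Homega : 0 < omega)
  (Hdelta : 0 <= delta <= 1) :
  let E0S := S0 b d Phis alpha omega mu in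
  let E0V := V0 b d Phis alpha omega mu in
  let E0R := R0comp b d Phis alpha omega mu in
  let zero := fun _ : nat => 0 in
  let EQ := is_equilibrium n p b d Phis lam phi mu alpha beta gamma eta omega delta in
  let endemic := fun S V I Q Rr =>
      EQ S V I Q Rr /\ nonneg_state n S V I Q Rr /\ Theta n p phi I > 0 in
  EQ E0S E0V zero zero E0R /\
  (forall S V I Q Rr, EQ S V I Q Rr -> Theta n p phi I = 0 ->
     same_state n S V I Q Rr E0S E0V zero zero E0R) /\
  ((exists S V I Q Rr, endemic S V I Q Rr) <->
     Rnought n p b d Phis lam phi mu alpha beta gamma omega delta > 1) /\
  (forall S V I Q Rr, endemic S V I Q Rr ->
     forall k, (1 <= k <= n)%nat -> I k > 0) /\
  (Rnought n p b d Phis lam phi mu alpha beta gamma omega delta > 1 ->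
   forall S V I Q Rr S' V' I' Q' Rr',
     endemic S V I Q Rr -> endemic S' V' I' Q' Rr' ->
     same_state n S V I Q Rr S' V' I' Q' Rr').
Proof.
  destruct Hdelta as [Hdelta0 _].
  assert (Hb : 0 < b) by lra.
  cbv zeta. split; [|split; [|split; [|split]]].
  - apply (disease_free_equilibrium n p b d Phis lam phi mu alpha beta gamma eta omega delta); auto.
  - apply (disease_free_unique n p b d Phis lam phi mu alpha beta gamma eta omega delta); auto.
  - apply (endemic_exists_iff n p b d Phis lam phi mu alpha beta gamma eta omega delta); auto.
  - apply (endemic_I_pos n p b d Phis lam phi mu alpha beta gamma eta omega delta); auto.
  - intros _. apply (endemic_unique n p b d Phis lam phi mu alpha beta gamma eta omega delta); auto.
Qed.
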